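(* Let $A\in\mathbb{R}^{n\times n}$, $B\in\mathbb{R}^{n\times m}$ be (unknown) matrices of the system $\Sigma:\ \dot x=Ax+Bu,\ y=x$, with $x\in X\subset\mathbb{R}^n$, $u\in U\subset\mathbb{R}^m$. Let $T\in\mathbb{N}^+$ and data matrices $\mathcal U_{0,T}\in\mathbb{R}^{m\times T}$, $\mathcal X_{0,T},\mathcal X_{1,T},\bar{\mathcal X}_{0,T},\bar{\mathcal X}_{1,T}\in\mathbb{R}^{n\times T}$ satisfy $\mathcal X_{1,T}=A\mathcal X_{0,T}+B\mathcal U_{0,T}$ and $\bar{\mathcal X}_{1,T}=A\bar{\mathcal X}_{0,T}$, with $\mathcal X_{0,T},\bar{\mathcal X}_{0,T}$ of full row rank; let $\bar Q\in\mathbb{R}^{T\times n}$ satisfy $\bar{\mathcal X}_{0,T}\bar Q=\mathds{I}_n$. Suppose there exist $\hat\kappa>0$ and matrices $\mathcal H\in\mathbb{R}^{T\times n}$, $\hat A\in\mathbb{R}^{\hat n\times\hat n}$, $\Xi\in\mathbb{R}^{m\times\hat n}$, $\Theta\in\mathbb{R}^{n\times\hat n}$ such that (i) $\mathcal X_{0,T}\mathcal H=P^{-1}$ for some symmetric $P\succ0$; (ii) with $Q:=\mathcal H P$ (so $\mathcal X_{0,T}Q=\mathds{I}_n$), the matrix $\mathcal U_{0,T}Q$ has full row rank and, writing $B_{\mathrm{d}}:=(\mathcal X_{1,T}Q-\bar{\mathcal X}_{1,T}\bar Q)(\mathcal U_{0,T}Q)^\dagger$, one has $\bar{\mathcal X}_{1,T}\bar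 Q\,\Theta=\Theta\hat A-B_{\mathrm{d}}\Xi$; (iii) $\mathcal H^\top\mathcal X_{1,T}^\top+\mathcal X_{1,T}\mathcal H\preceq-\hat\kappa\,\mathcal X_{0,T}\mathcal H$. Let $\hat B\in\mathbb{R}^{\hat n\times\hat m}$ be arbitrary, $\Psi\in\mathbb{R}^{m\times\hat m}$ arbitrary, $\hat C=\Theta$, and consider the reduced-order model $\hat\Sigma:\ \dot{\hat x}=\hat A\hat x+\hat B\hat u,\ \hat y=\hat C\hat x$, with $\hat x\in\hat X\subset\mathbb{R}^{\hat n}$, $\hat u\in\hat U\subset\mathbb{R}^{\hat m}$, and the interface map $u=\mathcal U_{0,T}Q(x-\Theta\hat x)+\Xi\hat x+\Psi\hat u$. Then for any $\varepsilon$ with $0<\varepsilon<\hat\kappa$, the function $\mathcal V(x,\hat x)=(x-\Theta\hat x)^\top P(x-\Theta\hat x)$ is a simulation function from $\hat\Sigma$ to $\Sigma$ with $\alpha=\lambda_{\min}(P)$, $\kappa=\hat\kappa-\varepsilon$ and $\rho=\frac1\varepsilon\big\|\sqrt P\,(B_{\mathrm d}\Psi-\Theta\hat B)\big\|^2$; specifically, $\alpha\|x-\hat C\hat x\|^2\le\mathcal V(x,\hat x)$ for all $x\in X,\hat x\in\hat X$, and for all $x\in X,\hat x\in\hat X,\hat u\in\hat U$, with $u$ given by the interface map, $$\partial_x\mathcal V(x,\hat x)(Ax+Bu)+\partial_{\hat x}\mathcal V(x,\hat x)(\hat A\hat x+\hat B\hat u)\le-\kappa\mathcal V(x,\hat x)+\rho\|\hat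 u\|^2.$$
   Context: A simulation function (SF) from $\hat\Sigma$ to $\Sigma$ is $\mathcal V:X\times\hat X\to\mathbb{R}_0^+$ for which there are $\alpha,\kappa,\rho>0$ with $\alpha\|y-\hat y\|^2\le\mathcal V(x,\hat x)$ for all $x,\hat x$ (where $y=x$, $\hat y=\hat C\hat x$), and for all $x,\hat x,\hat u$ there is $u$ with $\mathsf L\mathcal V(x,\hat x)\le-\kappa\mathcal V(x,\hat x)+\rho\|\hat u\|^2$, where $\mathsf L\mathcal V$ is the Lie derivative along $(Ax+Bu,\hat A\hat x+\hat B\hat u)$. The data $\mathcal X_{0,T},\mathcal X_{1,T},\mathcal U_{0,T}$ are samples of state, state derivative and input along one trajectory; $\bar{\mathcal X}_{0,T},\bar{\mathcal X}_{1,T}$ along a second trajectory with zero input. $M^\dagger$ is the right pseudoinverse of a full-row-rank matrix $M$ ($MM^\dagger=\mathds I$); $\sqrt P$ is the symmetric positive definite square root; $\lambda_{\min}$ is the smallest eigenvalue; $\|\cdot\|$ is the Euclidean norm / induced matrix norm. *)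

From HB Require Import structures.
From mathcomp Require Import all_boot all_order all_algebra.
From mathcomp Require Import all_classical all_reals all_analysis.
Set Implicit Arguments. Unset Strict Implicit. Unset Printing Implicit Defensive.
Import Order.TTheory GRing.Theory Num.Theory.
Import numFieldNormedType.Exports.
Local Open Scope classical_set_scope.
Local Open Scope ring_scope.

Section Defs.
Variable R : realType.

Definition qform n (M : 'M[R]_n) (v : 'cV[R]_n) : R := (v^T *m M *m v) ord0 ord0.

Definition posdef n (M : 'M[R]_n) : Prop :=
  M^T = M /\ forall v : 'cV[R]_n, v != 0 -> 0 < qform M v.

Definition loewner_le n (M1 M2 : 'M[R]_n) : Prop :=
  forall v : 'cV[R]_n, 0 <= qform (M2 - M1) v.

Definition enorm n (v : 'cV[R]_n) : R := Num.sqrt (\sum_i (v i ord0) ^+ 2).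

Definition opnorm n m (M : 'M[R]_(n, m)) : R :=
  sup [set enorm (M *m v) | v in [set v : 'cV[R]_m | enorm v <= 1]].

Definition rpinv n m (M : 'M[R]_(n, m)) : 'M[R]_(m, n) := M^T *m invmx (M *m M^T).

Definition lambda_min n (M : 'M[R]_n) : R := inf [set a : R | eigenvalue M a].

Definition sqrtm n (M : 'M[R]_n) : 'M[R]_n :=
  xget 0 [set S : 'M[R]_n | posdef S /\ S *m S = M].

End Defs.

(* With Q := H P the data give X0 Q = I, Xb1 Qb = A and X1 Q = A + B K for
   K := U0 Q, so Bd = B and condition (ii) is the matching condition
   Theta Ah = A Theta + B Xi.  Under the interface map the error
   e := x - Theta xh then obeys  e' = (A + B K) e + (B Psi - Theta Bh) uh,
   and the Lie derivative of V is 2 e^T P (A + B K) e + 2 e^T P (B Psi - Theta Bh) uh.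
   Condition (iii), evaluated at z := P e, bounds the first term by -kh V, and
   Young's inequality bounds the second by eps V + eps^-1 |sqrt P (B Psi - Theta Bh) uh|^2.
   The bound lambda_min(P) |e|^2 <= V and the existence of sqrt P follow from
   the unitary diagonalisation of P viewed as a complex matrix; sqrt P is
   obtained as a real polynomial in P interpolating the square root at the
   eigenvalues. *)

From HB Require Import structures.
From mathcomp Require Import all_boot all_order all_algebra.
From mathcomp Require Import all_classical all_reals all_analysis.
From mathcomp Require Import spectral complex.
From mathcomp Require Import ring lra.
Import Order.TTheory GRing.Theory Num.Theory.
Import numFieldNormedType.Exports.
Local Open Scope classical_set_scope.
Local Open Scope ring_scope.
Set Implicit Arguments. Unset Strict Implicit. Unset Printing Implicit Defensive.

Section BilinearForm.
Variable R : realType.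
Implicit Types (n : nat).

Definition bform n (M : 'M[R]_n) (x y : 'cV[R]_n) : R := (x^T *m M *m y) 0 0.

Lemma qformE n (M : 'M[R]_n) x : qform M x = bform M x x.
Proof. by []. Qed.

Lemma bformDl n (M : 'M[R]_n) x y z : bform M (x + y) z = bform M x z + bform M y z.
Proof. by rewrite /bform linearD /= !mulmxDl mxE. Qed.

Lemma bformDr n (M : 'M[R]_n) x y z : bform M x (y + z) = bform M x y + bform M x z.
Proof. by rewrite /bform mulmxDr mxE. Qed.

Lemma bformZl n (M : 'M[R]_n) c x y : bform M (c *: x) y = c * bform M x y.
Proof. by rewrite /bform linearZ /= -!scalemxAl mxE. Qed.

Lemma bformZr n (M : 'M[R]_n) c x y : bform M x (c *: y) = c * bform M x y.
Proof. by rewrite /bform -scalemxAr mxE. Qed.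

Lemma bform_addmx n (M N : 'M[R]_n) x y : bform (M + N) x y = bform M x y + bform N x y.
Proof. by rewrite /bform mulmxDr mulmxDl mxE. Qed.

Lemma bform_oppmx n (M : 'M[R]_n) x y : bform (- M) x y = - bform M x y.
Proof. by rewrite /bform mulmxN mulNmx mxE. Qed.

Lemma bform_scalemx n c (M : 'M[R]_n) x y : bform (c *: M) x y = c * bform M x y.
Proof. by rewrite /bform -scalemxAr -scalemxAl mxE. Qed.

Lemma bform_trmx n (M : 'M[R]_n) x y : bform M^T x y = bform M y x.
Proof.
rewrite /bform; have -> : (x^T *m M^T *m y) 0 0 = (x^T *m M^T *m y)^T 0 0 by rewrite [RHS]mxE.
by rewrite !trmx_mul !trmxK mulmxA.
Qed.

Lemma bformC n (M : 'M[R]_n) x y : M^T = M -> bform M x y = bform M y x.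
Proof. by move=> sM; rewrite -bform_trmx sM. Qed.

Lemma qformDZ n (M : 'M[R]_n) e w (h : R) :
  qform M (e + h *: w) = qform M e + h * (bform M e w + bform M w e) + h ^+ 2 * qform M w.
Proof.
rewrite !qformE bformDl !bformDr !bformZl !bformZr.
by rewrite expr2; ring.
Qed.

Lemma qform0 n (M : 'M[R]_n) : qform M 0 = 0.
Proof. by rewrite /qform mulmx0 mxE. Qed.

End BilinearForm.

Section Derivative.
Variable R : realType.

Lemma derive_qform_affine n k (P : 'M[R]_n) (g : 'cV[R]_k -> 'cV[R]_n) (a v : 'cV[R]_k) w :
  (forall h : R, g (h *: v + a) = g a + h *: w) ->
  'D_v (fun z => qform P (g z)) a = bform P (g a) w + bform P w (g a).
Proof.
move=> gE; rewrite /derive; apply: cvg_lim; first exact: norm_hausdorff.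
set b := bform P (g a) w + bform P w (g a).
have lin_cvg : (fun h : R => b + h * qform P w) @ (0:R)^' --> b.
  apply: cvg_within_filter.
  suff : (fun h : R => b + h * qform P w) @ (0:R) --> b + 0 * qform P w.
    by rewrite mul0r addr0.
  by apply: cvgD; [exact: cvg_cst | apply: cvgMr_tmp; exact: cvg_id].
apply: (cvg_trans _ lin_cvg); apply: near_eq_cvg; near=> h.
have hn0 : h != 0 by near: h; exact: nbhs_dnbhs_neq.
rewrite /= gE qformDZ -/b.
have -> : qform P (g a) + h * b + h ^+ 2 * qform P w - qform P (g a)
          = h * (b + h * qform P w) by ring.
by rewrite -[h^-1 *: _]/(h^-1 * _) mulKf.
Unshelve. all: by end_near.
Qed.

Lemma lie_derivative_qform n k (P : 'M[R]_n) (Th : 'M[R]_(n, k)) x xh f fh :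
  P^T = P ->
  'D_f (fun z => qform P (z - Th *m xh)) x + 'D_fh (fun zh => qform P (x - Th *m zh)) xh
  = 2 * bform P (x - Th *m xh) (f - Th *m fh).
Proof.
move=> sP; rewrite (@derive_qform_affine _ _ _ (fun z => z - Th *m xh) _ _ f); last first.
  by move=> h; rewrite [h *: f + x]addrC addrAC.
rewrite (@derive_qform_affine _ _ _ (fun zh => x - Th *m zh) _ _ (- (Th *m fh))); last first.
  by move=> h; rewrite mulmxDr -scalemxAr scalerN opprD addrA addrAC.
by rewrite [bform P f _]bformC // [bform P (- _) _]bformC // bformDr; ring.
Qed.

End Derivative.

Section EuclideanNorm.
Variable R : realType.
Implicit Types (n m k : nat).

Lemma mulTmx_sumsq n (w : 'cV[R]_n) : (w^T *m w) 0 0 = \sum_i w i ord0 ^+ 2.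
Proof. by rewrite mxE; apply: eq_bigr => i _; rewrite mxE expr2. Qed.

Lemma sumsq_ge0 n (w : 'cV[R]_n) : 0 <= \sum_i w i ord0 ^+ 2.
Proof. by apply: sumr_ge0 => i _; exact: sqr_ge0. Qed.

Lemma sumsq_eq0 n (w : 'cV[R]_n) : \sum_i w i ord0 ^+ 2 = 0 -> w = 0.
Proof.
move/eqP; rewrite psumr_eq0 => [/allP w0|i _]; last exact: sqr_ge0.
apply/matrixP => i j; rewrite ord1 mxE; apply/eqP; rewrite -sqrf_eq0.
by have /implyP := w0 i (mem_index_enum i); apply.
Qed.

Lemma enorm_ge0 n (w : 'cV[R]_n) : 0 <= enorm w.
Proof. exact: sqrtr_ge0. Qed.

Lemma enorm_sqr n (w : 'cV[R]_n) : enorm w ^+ 2 = \sum_i w i ord0 ^+ 2.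
Proof. by rewrite /enorm sqr_sqrtr // sumsq_ge0. Qed.

Lemma enorm_eq0 n (w : 'cV[R]_n) : enorm w = 0 -> w = 0.
Proof. by move=> w0; apply: sumsq_eq0; rewrite -enorm_sqr w0 expr0n. Qed.

Lemma enormZ n (c : R) (w : 'cV[R]_n) : enorm (c *: w) = `|c| * enorm w.
Proof.
rewrite /enorm; under eq_bigr do rewrite mxE exprMn.
by rewrite -mulr_sumr sqrtrM ?sqr_ge0 // sqrtr_sqr.
Qed.

Lemma enorm0 n : enorm (0 : 'cV[R]_n) = 0.
Proof. by rewrite -(scale0r 0) enormZ normr0 mul0r. Qed.

Lemma coord_le_enorm n (w : 'cV[R]_n) j : `|w j ord0| <= enorm w.
Proof.
rewrite -sqrtr_sqr /enorm; apply: ler_wsqrtr.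
by rewrite (bigD1 j) //= lerDl; apply: sumr_ge0 => i _; exact: sqr_ge0.
Qed.

Lemma enorm_le_l1 n (w : 'cV[R]_n) : enorm w <= \sum_i `|w i ord0|.
Proof.
have s0 : 0 <= \sum_i `|w i ord0| by apply: sumr_ge0 => i _.
rewrite -[X in _ <= X]ger0_norm // -sqrtr_sqr /enorm; apply: ler_wsqrtr.
rewrite expr2 mulr_suml; apply: ler_sum => i _.
rewrite -real_normK ?num_real // expr2; apply: ler_wpM2l => //.
by rewrite (bigD1 i) //= lerDl sumr_ge0.
Qed.

Lemma has_ubound_opnorm m k (N : 'M[R]_(m, k)) :
  has_ubound [set enorm (N *m v) | v in [set v : 'cV[R]_k | enorm v <= 1]].
Proof.
exists (\sum_i \sum_j `|N i j|) => _ [v vle1 <-].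
apply: (le_trans (enorm_le_l1 _)); apply: ler_sum => i _.
rewrite mxE; apply: (le_trans (ler_norm_sum _ _ _)); apply: ler_sum => j _.
rewrite normrM -[X in _ <= X]mulr1; apply: ler_wpM2l => //.
exact: le_trans (coord_le_enorm _ _) vle1.
Qed.

Lemma enorm_mulmx_le m k (N : 'M[R]_(m, k)) u : enorm (N *m u) <= opnorm N * enorm u.
Proof.
have [/enorm_eq0 ->|un0] := eqVneq (enorm u) 0.
  by rewrite mulmx0 !enorm0 mulr0.
have u_gt0 : 0 < enorm u by rewrite lt_def un0 enorm_ge0.
have : enorm (N *m ((enorm u)^-1 *: u)) <= opnorm N.
  apply: ub_le_sup; first exact: has_ubound_opnorm.
  exists ((enorm u)^-1 *: u) => //=.
  by rewrite enormZ ger0_norm ?invr_ge0 ?enorm_ge0 // mulVf.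
rewrite -scalemxAr enormZ ger0_norm ?invr_ge0 ?enorm_ge0 //.
by rewrite mulrC ler_pdivrMr.
Qed.

End EuclideanNorm.

Section PositiveDefinite.
Variable R : realType.
Implicit Types (n m k : nat).

Lemma posdef_qform_ge0 n (P : 'M[R]_n) v : posdef P -> 0 <= qform P v.
Proof.
move=> [_ pP]; have [->|v0] := eqVneq v 0; last exact/ltW/pP.
by rewrite qform0.
Qed.

Lemma bform_young n (P : 'M[R]_n) e y (eps : R) : posdef P -> 0 < eps ->
  2 * bform P e y <= eps * qform P e + eps^-1 * qform P y.
Proof.
move=> pdP eps_gt0; have [sP _] := pdP.
have := posdef_qform_ge0 (eps *: e + (-1) *: y) pdP.
rewrite qformDZ !qformE !bformZl !bformZr (bformC y) // -!qformE => sq_ge0.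
rewrite -(ler_pM2l eps_gt0) mulrDr mulVKf ?gt_eqF //.
lra.
Qed.

Lemma unitmx_rowV0 n (M : 'M[R]_n) : (forall u : 'rV[R]_n, u *m M = 0 -> u = 0) -> M \in unitmx.
Proof.
by move=> M0; rewrite -row_free_unit -kermx_eq0; apply/rowV0P => v /sub_kermxP; exact: M0.
Qed.

Lemma posdef_unitmx n (P : 'M[R]_n) : posdef P -> P \in unitmx.
Proof.
move=> [_ pP]; apply: unitmx_rowV0 => u uP; apply/eqP/negPn/negP => u0.
have /pP : u^T != 0 by rewrite trmx_eq0.
by rewrite /qform trmxK uP mul0mx mxE ltxx.
Qed.

Lemma mulmx_rpinv m k (M : 'M[R]_(m, k)) : row_free M -> M *m rpinv M = 1%:M.
Proof.
move=> rfM; rewrite /rpinv mulmxA mulmxV //; apply: unitmx_rowV0 => u uMMT.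
apply: (row_free_inj rfM); rewrite mul0mx; apply/trmx_inj; rewrite trmx0.
apply: sumsq_eq0; rewrite -mulTmx_sumsq trmxK.
by rewrite trmx_mul mulmxA -(mulmxA u) uMMT mul0mx mxE.
Qed.

End PositiveDefinite.

Section Interpolation.
Variable F : fieldType.

Definition interp_poly (s : seq F) (g : F -> F) : {poly F} :=
  \sum_(a <- s) g a *: \prod_(b <- s | b != a) ((a - b)^-1 *: ('X - b%:P)).

Lemma interp_polyE s g c : uniq s -> c \in s -> (interp_poly s g).[c] = g c.
Proof.
move=> s_uniq cs; rewrite /interp_poly horner_sum (bigD1_seq c) //=.
rewrite hornerZ horner_prod big1 ?mulr1; last first.
  by move=> b bc; rewrite hornerZ hornerXsubC mulVf // subr_eq0 eq_sym.
rewrite big1_seq ?addr0 // => a /andP [ac _].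
rewrite hornerZ horner_prod big_mkcond (bigD1_seq c) //= eq_sym ac.
by rewrite hornerZ hornerXsubC subrr mulr0 mul0r mulr0.
Qed.

End Interpolation.

Lemma trmx_horner_mx (R : comNzRingType) k (A : 'M[R]_k.+1) p :
  (horner_mx A p)^T = horner_mx A^T p.
Proof.
elim/poly_ind: p => [|p c IH]; first by rewrite !rmorph0 trmx0.
rewrite !(rmorphD, rmorphM) /= !(horner_mx_X, horner_mx_C) -!mulmxE linearD /=.
rewrite trmx_mul IH tr_scalar_mx; congr (_ + _).
by have := @comm_mx_horner _ _ A^T A^T p; rewrite /comm_mx => ->.
Qed.

Section Spectral.
Local Open Scope sesquilinear_scope.
Variable R : realType.
Local Notation C := (R[i]).
Local Notation toC := (real_complex R).
Implicit Types (n : nat).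

Lemma conjTmx_real n (P : 'M[R]_n) : P^T = P -> (map_mx toC P)^t* = map_mx toC P.
Proof.
move=> sP; rewrite map_trmx -map_mx_comp sP.
by apply: eq_map_mx => x /=; exact: conjc_real.
Qed.

Lemma symmetric_spectral n (P : 'M[R]_n) : P^T = P -> exists (U : 'M[C]_n) (d : 'rV[R]_n),
  U *m U^t* = 1%:M /\ map_mx toC P = U^t* *m diag_mx (map_mx toC d) *m U.
Proof.
move=> sP; set PC := map_mx toC P.
have PC_normal : PC \is normalmx by apply/normalmxP; rewrite conjTmx_real.
have PC_herm : PC \is hermsymmx by apply/is_hermitianmxP; rewrite expr0 scale1r conjTmx_real.
have U_unitary := spectral_unitarymx PC.
have /mxOverP diag_real := hermitian_spectral_diag_real PC_herm.
exists (spectralmx PC), (map_mx (@complex.Re R) (spectral_diag PC)).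
have -> : map_mx toC (map_mx (@complex.Re R) (spectral_diag PC)) = spectral_diag PC.
  by apply/matrixP => i j; rewrite !mxE RRe_real.
split; first exact/unitarymxP.
by rewrite -invmx_unitary //; apply/orthomx_spectralP.
Qed.

Section Diagonalized.
Variables (n : nat) (P : 'M[R]_n) (U : 'M[C]_n) (d : 'rV[R]_n).
Hypothesis UU : U *m U^t* = 1%:M.
Hypothesis PE : map_mx toC P = U^t* *m diag_mx (map_mx toC d) *m U.

Lemma spectral_eigenvalue j : eigenvalue P (d 0 j).
Proof.
rewrite eigenvalue_root_char -(fmorph_root toC) map_char_poly -eigenvalue_root_char.
apply/eigenvalueP; exists (row j U).
  rewrite -row_mul PE !mulmxA UU mul1mx mul_diag_mx.
  by apply/rowP => k; rewrite !mxE.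
apply/eqP => /(congr1 (mulmx^~ (U^t*))); rewrite -row_mul UU mul0mx.
by move/rowP/(_ j); rewrite !mxE eqxx /= => /eqP; rewrite oner_eq0.
Qed.

Lemma qform_spectral v : let w := U *m map_mx toC v in
  toC (qform P v) = \sum_i toC (d 0 i) * (w i 0 * (w i 0)^*).
Proof.
move=> w; have -> : toC (qform P v) = (map_mx toC (v^T *m P *m v)) 0 0 by rewrite mxE.
have wT : (map_mx toC v)^T *m U^t* = (map_mx Num.Def.conjC w)^T.
  rewrite map_mxM trmx_mul map_trmx; congr (_ *m _); apply/matrixP => i j; rewrite !mxE //.
  exact/esym/conjc_real.
rewrite !map_mxM PE -map_trmx !mulmxA wT -mulmxA mul_mx_diag mxE.
by apply: eq_bigr => i _; rewrite !mxE; ring.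
Qed.

Lemma spectral_qform_gt0 : (forall i, 0 < d 0 i) -> forall v, v != 0 -> 0 < qform P v.
Proof.
move=> d_gt0 v v0; rewrite -ltcR rmorph0 qform_spectral.
set w := U *m map_mx toC v.
have [i wi0] : exists i, w i 0 != 0.
  apply/existsP; apply: contraR v0 => /existsPn w0.
  have {}w0 : w = 0.
    by apply/matrixP => a b; rewrite ord1 [X in _ = X]mxE; apply/eqP/negPn; exact: w0.
  have vC0 : map_mx toC v = 0 by rewrite -[map_mx toC v]mul1mx -(mulmx1C UU) -mulmxA -/w w0 mulmx0.
  apply/eqP/(@map_mx_inj _ _ toC); rewrite vC0.
  by apply/matrixP => a b; rewrite !mxE.
rewrite (bigD1 i) //=; apply: ltr_wpDr.
  by apply: sumr_ge0 => j _; rewrite mulr_ge0 ?mul_conjC_ge0 // ler0c ltW.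
by rewrite mulr_gt0 ?mul_conjC_gt0 // ltcR.
Qed.

End Diagonalized.

Lemma horner_mx_spectral k (P : 'M[R]_k.+1) (U : 'M[C]_k.+1) (d : 'rV[R]_k.+1) p :
  U *m U^t* = 1%:M -> map_mx toC P = U^t* *m diag_mx (map_mx toC d) *m U ->
  map_mx toC (horner_mx P p) = U^t* *m diag_mx (map_mx toC (map_mx (horner p) d)) *m U.
Proof.
move=> UU PE; have Uunit : U \in unitmx by case: (mulmx1_unit (mulmx1C UU)).
have Uinv : invmx U = U^t* by rewrite -[U^t*]mulmx1 -(mulmxV Uunit) mulmxA (mulmx1C UU) mul1mx.
rewrite map_horner_mx PE -Uinv horner_mx_uconjC // horner_mx_diag.
by congr (_ *m diag_mx _ *m _); apply/matrixP => i j; rewrite ord1 !mxE horner_map.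
Qed.

Lemma posdef_eigenvalue_gt0 n (P : 'M[R]_n) a : posdef P -> eigenvalue P a -> 0 < a.
Proof.
move=> [_ pP] /eigenvalueP [v vP v0].
have vT0 : v^T != 0 by rewrite trmx_eq0.
have := pP _ vT0; rewrite /qform trmxK vP -scalemxAl mxE.
have : 0 < (v *m v^T) 0 0.
  rewrite -[v in v *m _]trmxK mulTmx_sumsq lt_def sumsq_ge0 andbT.
  by apply: contra vT0 => /eqP/sumsq_eq0 ->.
by move=> vv_gt0; rewrite pmulr_lgt0.
Qed.

Lemma lambda_min_qform n (P : 'M[R]_n) v :
  posdef P -> lambda_min P * enorm v ^+ 2 <= qform P v.
Proof.
move=> pdP; have [sP _] := pdP.
have [U [d [UU PE]]] := symmetric_spectral sP.
have lambda_le i : lambda_min P <= d 0 i.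
  apply: ge_inf; last exact: spectral_eigenvalue UU PE i.
  by exists 0 => a /(posdef_eigenvalue_gt0 pdP)/ltW.
have IE : map_mx toC 1%:M = U^t* *m diag_mx (map_mx toC (const_mx 1)) *m U.
  rewrite map_const_mx rmorph1 diag_const_mx mulmx1 (mulmx1C UU).
  by apply/matrixP => i j; rewrite !mxE; case: (i == j).
have -> : enorm v ^+ 2 = qform 1%:M v by rewrite /qform mulmx1 mulTmx_sumsq enorm_sqr.
rewrite -lecR rmorphM /= (qform_spectral PE) (qform_spectral IE) mulr_sumr.
apply: ler_sum => i _; rewrite mxE mul1r; apply: ler_wpM2r; first exact: mul_conjC_ge0.
by rewrite lecR.
Qed.

Lemma posdef_sqrt_exists n (P : 'M[R]_n) :
  posdef P -> exists S : 'M[R]_n, posdef S /\ S *m S = P.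
Proof.
case: n P => [|k] P pdP.
  by exists 0; rewrite !flatmx0; split=> //; split=> [|v]; rewrite ?trmx0 // flatmx0 eqxx.
have [sP _] := pdP; have [U [d [UU PE]]] := symmetric_spectral sP.
have d_gt0 i : 0 < d 0 i := posdef_eigenvalue_gt0 pdP (spectral_eigenvalue UU PE i).
pose p := interp_poly (undup [seq d 0 i | i <- enum 'I_k.+1]) Num.sqrt.
have sqrtdE : map_mx (horner p) d = map_mx Num.sqrt d.
  apply/matrixP => i j; rewrite ord1 !mxE interp_polyE ?undup_uniq //.
  by rewrite mem_undup map_f ?mem_enum.
have SE := horner_mx_spectral p UU PE; rewrite sqrtdE in SE.
exists (horner_mx P p); split.
  split; first by rewrite trmx_horner_mx sP.
  by apply: (spectral_qform_gt0 UU SE) => i; rewrite mxE sqrtr_gt0.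
apply: (@map_mx_inj _ _ toC); rewrite map_mxM SE PE.
rewrite !mulmxA -[_ *m U *m U^t*]mulmxA UU mulmx1 -[_ *m diag_mx _ *m diag_mx _]mulmxA.
congr (_ *m _ *m _); rewrite mul_diag_mx; apply/matrixP => i j; rewrite !mxE.
by case: (i == j); rewrite ?mulr1n ?mulr0n ?mulr0 // -rmorphM -expr2 sqr_sqrtr // ltW.
Qed.

Lemma sqrtmP n (P : 'M[R]_n) : posdef P -> posdef (sqrtm P) /\ sqrtm P *m sqrtm P = P.
Proof. by move=> pdP; apply: (xgetPex 0 (posdef_sqrt_exists pdP)). Qed.

Lemma qform_sqrtm n (P : 'M[R]_n) y : posdef P -> qform P y = enorm (sqrtm P *m y) ^+ 2.
Proof.
move=> /sqrtmP [[sS _] SS]; rewrite enorm_sqr -mulTmx_sumsq trmx_mul sS.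
by rewrite /qform -{1}SS !mulmxA.
Qed.

End Spectral.

Section ClosedLoop.
Variable R : realType.

Lemma interface_error_dynamics n m nh mh (A : 'M[R]_n) (B : 'M[R]_(n, m))
    (Th : 'M[R]_(n, nh)) (Ah : 'M[R]_nh) (Bh : 'M[R]_(nh, mh)) (Xi : 'M[R]_(m, nh))
    (Psi : 'M[R]_(m, mh)) (K : 'M[R]_(m, n)) (x : 'cV[R]_n) (xh : 'cV[R]_nh) uh :
  Th *m Ah = A *m Th + B *m Xi ->
  A *m x + B *m (K *m (x - Th *m xh) + Xi *m xh + Psi *m uh) - Th *m (Ah *m xh + Bh *m uh)
  = (A + B *m K) *m (x - Th *m xh) + (B *m Psi - Th *m Bh) *m uh.
Proof.
move=> ThAh; rewrite !mulmxDr !mulmxDl !mulmxN !mulNmx !mulmxA ThAh mulmxDl.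
by apply/matrixP => i j; rewrite !mxE; ring.
Qed.

Lemma qform_mulmx_le n k (P : 'M[R]_n) (M : 'M[R]_(n, k)) u : posdef P ->
  qform P (M *m u) <= opnorm (sqrtm P *m M) ^+ 2 * enorm u ^+ 2.
Proof.
move=> pdP; rewrite qform_sqrtm // mulmxA -exprMn !expr2.
by apply: ler_pM; rewrite ?enorm_ge0 ?enorm_mulmx_le.
Qed.

Lemma lyapunov_congruence n (P M : 'M[R]_n) (kh : R) : P^T = P -> P \in unitmx ->
  loewner_le (M^T + M) (- kh *: invmx P) ->
  forall e, 2 * bform P e (M *m P *m e) <= - kh * qform P e.
Proof.
move=> sP Punit lyap e; have := lyap (P *m e).
have MPe : bform M (P *m e) (P *m e) = bform P e (M *m P *m e).
  by rewrite /bform trmx_mul sP !mulmxA.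
have invPe : bform (invmx P) (P *m e) (P *m e) = qform P e.
  by rewrite /bform trmx_mul sP !mulmxA mulmxKV.
rewrite qformE bform_addmx bform_oppmx bform_addmx bform_scalemx bform_trmx MPe invPe.
lra.
Qed.

Section LieDerivative.
Variables (n m nh mh : nat) (A : 'M[R]_n) (B : 'M[R]_(n, m)) (Th : 'M[R]_(n, nh))
  (Ah : 'M[R]_nh) (Bh : 'M[R]_(nh, mh)) (Xi : 'M[R]_(m, nh)) (Psi : 'M[R]_(m, mh))
  (K : 'M[R]_(m, n)) (P : 'M[R]_n) (kh eps : R).
Hypothesis pdP : posdef P.
Hypothesis ThAh : Th *m Ah = A *m Th + B *m Xi.
Hypothesis decay : forall e, 2 * bform P e ((A + B *m K) *m e) <= - kh * qform P e.
Hypothesis eps_gt0 : 0 < eps.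

Lemma lie_derivative_le x xh uh :
  let u := K *m (x - Th *m xh) + Xi *m xh + Psi *m uh in
  'D_(A *m x + B *m u) (fun z => qform P (z - Th *m xh)) x
    + 'D_(Ah *m xh + Bh *m uh) (fun zh => qform P (x - Th *m zh)) xh
  <= - (kh - eps) * qform P (x - Th *m xh)
     + eps^-1 * opnorm (sqrtm P *m (B *m Psi - Th *m Bh)) ^+ 2 * enorm uh ^+ 2.
Proof.
have [sP _] := pdP.
rewrite /= lie_derivative_qform // interface_error_dynamics // bformDr.
set e := x - Th *m xh; set M := B *m Psi - Th *m Bh.
have := decay e; have := bform_young e (M *m uh) pdP eps_gt0.
have : eps^-1 * qform P (M *m uh) <= eps^-1 * (opnorm (sqrtm P *m M) ^+ 2 * enorm uh ^+ 2).
  by apply: ler_wpM2l; [rewrite invr_ge0 ltW | exact: qform_mulmx_le].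
lra.
Qed.

End LieDerivative.
End ClosedLoop.

Unset Implicit Arguments.
Theorem theorem2 (R : realType) (n m T nh mh : nat)
  (A : 'M[R]_n) (B : 'M[R]_(n, m))
  (U0 : 'M[R]_(m, T)) (X0 X1 Xb0 Xb1 : 'M[R]_(n, T)) (Qb : 'M[R]_(T, n))
  (kh : R) (H : 'M[R]_(T, n)) (Ah : 'M[R]_nh) (Xi : 'M[R]_(m, nh))
  (Theta : 'M[R]_(n, nh)) (P : 'M[R]_n)
  (Bh : 'M[R]_(nh, mh)) (Psi : 'M[R]_(m, mh))
  (X : set 'cV[R]_n) (Xh : set 'cV[R]_nh) (Uh : set 'cV[R]_mh) (eps : R) :
  (0 < T)%N ->
  X1 = A *m X0 + B *m U0 ->
  Xb1 = A *m Xb0 ->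
  row_free X0 -> row_free Xb0 ->
  Xb0 *m Qb = 1%:M ->
  0 < kh ->
  (* (i) *)
  posdef P -> X0 *m H = invmx P ->
  (* (ii) *)
  row_free (U0 *m (H *m P)) ->
  Xb1 *m Qb *m Theta
    = Theta *m Ah
      - ((X1 *m (H *m P) - Xb1 *m Qb) *m rpinv (U0 *m (H *m P))) *m Xi ->
  (* (iii) *)
  loewner_le (H^T *m X1^T + X1 *m H) (- kh *: (X0 *m H)) ->
  0 < eps -> eps < kh ->
  let Q := H *m P in
  let Bd := (X1 *m Q - Xb1 *m Qb) *m rpinv (U0 *m Q) in
  let Ch := Theta in
  let V := fun (x : 'cV[R]_n) (xh : 'cV[R]_nh) => qform P (x - Theta *m xh) in
  let alpha := lambda_min P in
  let kappa := kh - eps in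
  let rho := eps^-1 * opnorm (sqrtm P *m (Bd *m Psi - Theta *m Bh)) ^+ 2 in
  0 < kappa /\
  (forall x xh, X x -> Xh xh -> alpha * enorm (x - Ch *m xh) ^+ 2 <= V x xh) /\
  (forall x xh uh, X x -> Xh xh -> Uh uh ->
     let u := U0 *m Q *m (x - Theta *m xh) + Xi *m xh + Psi *m uh in
     'D_(A *m x + B *m u) (fun z => V z xh) x
       + 'D_(Ah *m xh + Bh *m uh) (fun zh => V x zh) xh
     <= - kappa * V x xh + rho * enorm uh ^+ 2).
Proof.
move=> _ X1E Xb1E _ _ XbQb _ pdP X0H rfU0Q matching lyap eps_gt0 eps_lt_kh
  Q Bd Ch V alpha kappa rho.
have [sP _] := pdP; have Punit := posdef_unitmx pdP.
have X0Q : X0 *m Q = 1%:M by rewrite /Q mulmxA X0H mulVmx.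
have Xb1Qb : Xb1 *m Qb = A by rewrite Xb1E -mulmxA XbQb mulmx1.
have X1Q : X1 *m Q = A + B *m (U0 *m Q) by rewrite X1E mulmxDl -!mulmxA X0Q mulmx1.
have BdE : Bd = B by rewrite /Bd Xb1Qb X1Q addrC addKr -mulmxA mulmx_rpinv ?mulmx1.
have ThAh : Theta *m Ah = A *m Theta + B *m Xi.
  by move: matching; rewrite -/Q -/Bd BdE Xb1Qb => ->; rewrite subrK.
have decay e : 2 * bform P e ((A + B *m (U0 *m Q)) *m e) <= - kh * qform P e.
  rewrite -X1Q /Q mulmxA; apply: lyapunov_congruence => //.
  by rewrite trmx_mul -X0H.
split; first by rewrite subr_gt0.
split=> [x xh _ _|x xh uh _ _ _]; first exact: lambda_min_qform.
by rewrite /rho BdE; exact: lie_derivative_le.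
Qed.
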